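(* Let $\Lambda=\{0,1,3\}\subset\mathbb{Z}$ and let $\mu_\Lambda$ be the probability measure on $\{0,1\}^\Lambda$ giving probability $1/2$ to each of the configurations $(\eta_0,\eta_1,\eta_3)=(1,1,0)$ and $(\eta_0,\eta_1,\eta_3)=(0,0,1)$. Then $\mu_\Lambda$ is LTI, but there is no LTI probability measure on $\{0,1\}^{\{0,1,2,3\}}$ with marginal $\mu_\Lambda$ on $\{0,1\}^\Lambda$; in particular there is no translation invariant probability measure on $\{0,1\}^{\mathbb{Z}}$ with marginal $\mu_\Lambda$.
   Context: A probability measure $\mu_\Lambda$ on $\{0,1\}^\Lambda$, $\Lambda\subset\mathbb{Z}^d$, is LTI if for all subsets $A,A'\subset\Lambda$ with $A'$ a translate of $A$, the marginal on $\{0,1\}^{A'}$ is the translate of the marginal on $\{0,1\}^A$. *)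

From HB Require Import structures.
From mathcomp Require Import all_boot all_order all_algebra.
Set Implicit Arguments. Unset Strict Implicit. Unset Printing Implicit Defensive.
Import Order.TTheory GRing.Theory Num.Theory.
Local Open Scope ring_scope.

(* A finite set Lambda of Z is given by a duplicate-free list L : seq int;
   its sites are indexed by 'I_(size L), site i sitting at position [pos L i]. *)
Definition site (L : seq int) := 'I_(size L).
Definition pos (L : seq int) (i : site L) : int := nth 0 L i.

Definition conf (L : seq int) := {ffun site L -> bool}.

Definition is_prob (R : realFieldType) (L : seq int) (mu : conf L -> R) : Prop :=
  (forall eta, 0 <= mu eta) /\ \sum_(eta : conf L) mu eta = 1.

Definition marg (R : realFieldType) (L : seq int) (mu : conf L -> R)
  (A : {set site L}) (xi : conf L) : R :=
  \sum_(eta : conf L | [forall x in A, eta x == xi x]) mu eta.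

(* A' = A + t as subsets of Z *)
Definition is_translate (L : seq int) (A A' : {set site L}) (t : int) : Prop :=
  forall z : int,
    (exists2 y, y \in A' & pos y = z) <-> (exists2 x, x \in A & pos x + t = z).

Definition LTI (R : realFieldType) (L : seq int) (mu : conf L -> R) : Prop :=
  forall (A A' : {set site L}) (t : int), is_translate A A' t ->
  forall xi xi' : conf L,
    (forall x y, x \in A -> y \in A' -> pos y = pos x + t -> xi' y = xi x) ->
    marg mu A xi = marg mu A' xi'.

Definition has_marginal (R : realFieldType) (L M : seq int)
  (nu : conf M -> R) (mu : conf L -> R) : Prop :=
  forall (eta : conf M) (xi : conf L),
    (forall (i : site L) (j : site M), pos i = pos j -> xi i = eta j) ->
    marg nu [set j | pos j \in L] eta = mu xi.

Definition Lam : seq int := [:: 0; 1; 3].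
Definition Lam4 : seq int := [:: 0; 1; 2; 3].

Definition c110 : conf Lam := [ffun i : site Lam => nth false [:: true; true; false] (nat_of_ord i)].
Definition c001 : conf Lam := [ffun i : site Lam => nth false [:: false; false; true] (nat_of_ord i)].

Definition muLam (R : realFieldType) (eta : conf Lam) : R :=
  (eta == c110)%:R / 2 + (eta == c001)%:R / 2.

(* Lam = {0,1,3} is a Sidon set: a nonzero translation moves at most one of its
   points back into it, so the LTI conditions for mu only involve subsets with
   at most one site, on which every marginal of mu is uniform.  Any extension nu
   to {0,1,2,3} is supported, by the marginal condition, on configurations with
   eta_0 = eta_1 <> eta_3; translating the pair {0,1} to {1,2} and to {2,3}
   then forces eta_1 = eta_2 = eta_3 nu-a.s., so nu = 0. *)
From HB Require Import structures.
From mathcomp Require Import all_boot all_order all_algebra zify.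
Set Implicit Arguments. Unset Strict Implicit. Unset Printing Implicit Defensive.
Import Order.TTheory GRing.Theory Num.Theory.
Local Open Scope ring_scope.

Definition sidon (L : seq int) : Prop :=
  forall a b c d : site L, pos c - pos a = pos d - pos b -> c != a -> a = b.

Section Translates.

Variable L : seq int.
Hypothesis L_uniq : uniq L.

Lemma pos_inj : injective (@pos L).
Proof.
by move=> i j /eqP; rewrite /pos nth_uniq // => /eqP/val_inj.
Qed.

Lemma translate_pair (a b c d : site L) (t : int) :
  pos a + t = pos c -> pos b + t = pos d ->
  is_translate [set a; b] [set c; d] t.
Proof.
move=> ac bd z; split=> -[w]; rewrite !inE => /orP[]/eqP-> <-.
- by exists a; rewrite ?inE ?eqxx.
- by exists b; rewrite ?inE ?eqxx ?orbT.
- by exists c; rewrite ?inE ?eqxx.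
- by exists d; rewrite ?inE ?eqxx ?orbT.
Qed.

Lemma translate_set0 (A A' : {set site L}) (t : int) :
  is_translate A A' t -> (A == set0) = (A' == set0).
Proof.
move=> tr; apply/eqP/eqP => [A0 | A'0]; apply/setP => x; rewrite in_set0.
- apply/negbTE/negP => xA'; have [y] := (tr (pos x)).1 (ex_intro2 _ _ x xA' erefl).
  by rewrite A0 in_set0.
- apply/negbTE/negP => xA; have [y] := (tr (pos x + t)).2 (ex_intro2 _ _ x xA erefl).
  by rewrite A'0 in_set0.
Qed.

Lemma translate0 (A A' : {set site L}) : is_translate A A' 0 -> A' = A.
Proof.
move=> tr; apply/setP => x; apply/idP/idP => xA.
- have [y yA] := (tr (pos x)).1 (ex_intro2 _ _ x xA erefl).
  by rewrite addr0 => /pos_inj <-.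
- have [y yA' /pos_inj <-] := (tr (pos x)).2 (ex_intro2 _ _ x xA (addr0 _)).
  exact: yA'.
Qed.

Lemma sidon_translate_card_le1 (A A' : {set site L}) (t : int) :
  sidon L -> t != 0 -> is_translate A A' t -> (#|A| <= 1)%N /\ (#|A'| <= 1)%N.
Proof.
move=> sidonL t0 tr.
have A_le1 : {in A &, forall a b, a = b}.
  move=> a b aA bA.
  have [c _ ac] := (tr (pos a + t)).2 (ex_intro2 _ _ a aA erefl).
  have [d _ bd] := (tr (pos b + t)).2 (ex_intro2 _ _ b bA erefl).
  apply: (sidonL a b c d); first lia.
  by apply: contra_neq t0 => ca; move: ac; rewrite ca; lia.
split; apply/card_le1_eqP => c d cA dA /=; first exact: A_le1.
apply: pos_inj.
have [a aA <-] := (tr (pos c)).1 (ex_intro2 _ _ c cA erefl).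
have [b bA <-] := (tr (pos d)).1 (ex_intro2 _ _ d dA erefl).
by rewrite (A_le1 a b).
Qed.

End Translates.

Section Marginals.

Variables (R : realFieldType) (L : seq int) (mu : conf L -> R).

Lemma eq_marg (A : {set site L}) (xi xi' : conf L) :
  {in A, xi =1 xi'} -> marg mu A xi = marg mu A xi'.
Proof.
move=> xixi'; apply: eq_bigl => eta; apply: eq_forallb_in => x xA.
by rewrite xixi'.
Qed.

Lemma le_marg (A : {set site L}) (eta : conf L) :
  (forall e, 0 <= mu e) -> mu eta <= marg mu A eta.
Proof.
move=> mu_ge0; rewrite /marg (bigD1 eta) /=; last exact/forall_inP.
by rewrite lerDl sumr_ge0.
Qed.

Lemma LTI_vanish (A A' : {set site L}) (t : int) (xi eta : conf L) :
  (forall e, 0 <= mu e) -> LTI mu -> is_translate A A' t ->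
  (forall x y, x \in A -> y \in A' -> pos y = pos x + t -> eta y = xi x) ->
  marg mu A xi = 0 -> mu eta = 0.
Proof.
move=> mu_ge0 mu_LTI tr xi_eta marg0; apply/eqP; rewrite eq_le mu_ge0 andbT.
by rewrite -marg0 (mu_LTI A A' t tr xi eta xi_eta) le_marg.
Qed.

End Marginals.

Lemma sum_pred1_natr (R : pzSemiRingType) (I : finType) (P : pred I) (c : I) (a : R) :
  \sum_(i | P i) (i == c)%:R * a = (P c)%:R * a.
Proof.
have [Pc | notPc] := boolP (P c).
  rewrite (bigD1 c) //= eqxx mul1r big1 ?addr0 // => i /andP[_ /negbTE->].
  exact: mul0r.
rewrite mul0r big1 // => i Pi; case: eqP => [ic | _]; last exact: mul0r.
by rewrite -ic Pi in notPc.
Qed.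

Definition conf3 (b0 b1 b3 : bool) : conf Lam :=
  [ffun i : site Lam => nth false [:: b0; b1; b3] i].

Lemma conf3_eq b0 b1 b3 b0' b1' b3' :
  (conf3 b0 b1 b3 == conf3 b0' b1' b3') = [&& b0 == b0', b1 == b1' & b3 == b3'].
Proof.
apply/eqP/and3P => [/ffunP E | [/eqP-> /eqP-> /eqP->] //].
by split; apply/eqP; [move: (E (@Ordinal 3 0 isT)) | move: (E (@Ordinal 3 1 isT))
  | move: (E (@Ordinal 3 2 isT))]; rewrite !ffunE.
Qed.

Lemma Lam_uniq : uniq Lam. Proof. by []. Qed.

Lemma Lam_sidon : sidon Lam.
Proof.
by move=> [[|[|[|//]]] ?] [[|[|[|//]]] ?] [[|[|[|//]]] ?] [[|[|[|//]]] ?] //= _ _;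
  apply: val_inj.
Qed.

Lemma c001_c110 (x : site Lam) : c001 x = ~~ c110 x.
Proof. by rewrite !ffunE; case: x => -[|[|[|//]]]. Qed.

Section MuLam.

Variable R : realFieldType.

Lemma muLam_conf3 b0 b1 b3 :
  muLam R (conf3 b0 b1 b3) = ((b0 == b1) && (b1 != b3))%:R / 2.
Proof.
rewrite /muLam -[c110]/(conf3 true true false) -[c001]/(conf3 false false true).
by rewrite !conf3_eq; case: b0; case: b1; case: b3; rewrite /= ?mul0r ?addr0 ?add0r.
Qed.

Lemma is_prob_muLam : is_prob (muLam R).
Proof.
split=> [eta | ]; first by rewrite /muLam addr_ge0 // divr_ge0 // ler0n.
by rewrite /muLam big_split /= !(sum_pred1_natr predT) /= -splitr.
Qed.

Lemma marg_muLam (A : {set site Lam}) (xi : conf Lam) :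
  marg (muLam R) A xi =
  ([forall x in A, c110 x == xi x]%:R + [forall x in A, c001 x == xi x]%:R) / 2.
Proof. by rewrite /marg /muLam big_split /= !sum_pred1_natr mulrDl. Qed.

Lemma marg_muLam_card_le1 (A : {set site Lam}) (xi : conf Lam) : (#|A| <= 1)%N ->
  marg (muLam R) A xi = if A == set0 then 1 else 2^-1.
Proof.
move=> /card_le1_eqP A_le1; rewrite marg_muLam.
have [-> | [x xA]] := set_0Vmem A.
  have agree c : [forall y in set0, c y == xi y] by apply/forall_inP => y; rewrite in_set0.
  by rewrite eqxx !agree mulrDl -splitr.
have agree c : [forall y in A, c y == xi y] = (c x == xi x).
  apply/forall_inP/eqP => [c_xi | c_xi y yA]; first exact/eqP/c_xi.
  by rewrite -(A_le1 y x yA xA) c_xi.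
have /negbTE-> : A != set0 by apply/set0Pn; exists x.
by rewrite !agree c001_c110; case: (c110 x); case: (xi x); rewrite /= ?add0r ?addr0 mul1r.
Qed.

Lemma LTI_muLam : LTI (muLam R).
Proof.
move=> A A' t tr xi xi' xi'E.
have [t0 | t_neq0] := eqVneq t 0.
  move: tr xi'E; rewrite t0 => /(translate0 Lam_uniq) -> xi'E.
  by apply: eq_marg => x xA; rewrite (xi'E x x xA xA) ?addr0.
have [A_le1 A'_le1] := sidon_translate_card_le1 Lam_uniq Lam_sidon t_neq0 tr.
by rewrite !marg_muLam_card_le1 // (translate_set0 tr).
Qed.

End MuLam.

Definition j0 : site Lam4 := @Ordinal 4 0 isT.
Definition j1 : site Lam4 := @Ordinal 4 1 isT.
Definition j2 : site Lam4 := @Ordinal 4 2 isT.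
Definition j3 : site Lam4 := @Ordinal 4 3 isT.

Section Extension.

Variables (R : realFieldType) (nu : conf Lam4 -> R).
Hypotheses (nu_ge0 : forall eta, 0 <= nu eta) (nu_LTI : LTI nu)
  (nu_marg : has_marginal nu (muLam R)).

Lemma extension_support (eta : conf Lam4) :
  nu eta != 0 -> (eta j0 == eta j1) && (eta j1 != eta j3).
Proof.
have eta_Lam (i : site Lam) (j : site Lam4) :
    pos i = pos j -> conf3 (eta j0) (eta j1) (eta j3) i = eta j.
  rewrite ffunE; case: i j => -[|[|[|//]]] ? [[|[|[|[|//]]]] ?] //= _;
    by congr (eta _); apply: val_inj.
apply: contraNT => /negbTE not_support; rewrite eq_le nu_ge0 andbT.
have := @le_marg _ _ nu [set j | pos j \in Lam] eta nu_ge0.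
by rewrite (nu_marg eta_Lam) muLam_conf3 not_support mul0r.
Qed.

Lemma extension_adjacent (a b : site Lam4) (eta : conf Lam4) :
  pos b = pos a + 1 -> nu eta != 0 -> eta a = eta b.
Proof.
move=> ab; apply: contraNeq => eta_ab; apply/eqP.
pose xi : conf Lam4 := [ffun j => if j == j0 then eta a else eta b].
have tr : is_translate [set j0; j1] [set a; b] (pos a).
  by apply: translate_pair; rewrite /= ?add0r // ab addrC.
apply: (LTI_vanish nu_ge0 nu_LTI tr (xi := xi)).
  move=> x y; rewrite !inE => /orP[]/eqP-> /orP[]/eqP-> /= h; rewrite ffunE //=;
  by move: h ab; rewrite /pos /=; lia.
rewrite /marg big1 // => e /forall_inP e_xi.
have e01 : e j0 != e j1.
  by rewrite (eqP (e_xi j0 _)) ?(eqP (e_xi j1 _)) ?ffunE ?inE ?eqxx ?orbT.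
by apply/eqP; apply: contraTT e01 => /extension_support/andP[-> _].
Qed.

Lemma extension_eq0 (eta : conf Lam4) : nu eta = 0.
Proof.
apply/eqP; apply: contraT => nz.
have /andP[_] := extension_support nz.
by rewrite (@extension_adjacent j1 j2 eta) ?(@extension_adjacent j2 j3 eta) ?eqxx.
Qed.

End Extension.

Theorem mainTheorem11 (R : realFieldType) :
  is_prob (muLam R) /\ LTI (muLam R) /\
  ~ (exists nu : conf Lam4 -> R,
       is_prob nu /\ LTI nu /\ has_marginal nu (muLam R)).
Proof.
split; first exact: is_prob_muLam.
split; first exact: LTI_muLam.
move=> [nu [[nu_ge0 nu_sum1] [nu_LTI nu_marg]]].
move: nu_sum1; rewrite big1 => [/esym/eqP | eta _]; last exact: extension_eq0.
by rewrite oner_eq0.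
Qed.
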